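(* Let $q\ge 2$, $F,P,m>0$, and consider positive reals $f_1,\dots,f_q,p_1,\dots,p_q$ subject to $\sum_i f_i=F$, $\sum_i p_i=P$, $f_1p_1\ge f_2p_2\ge\dots\ge f_qp_q$, and $f_1p_1\le m$. Then the supremum of $\sum_{i=1}^q f_ip_i$ under these constraints equals $f_{\max}(F,P,m)=FP$ if $FP\le m$; $\;um+(\sqrt{FP}-u\sqrt m)^2$ if $\frac{FP}{(u+1)^2}\le m<\frac{FP}{u^2}$ for some $u\in\{1,\dots,q-1\}$; $\;mq$ if $m<\frac{FP}{q^2}$. *)

From Stdlib Require Import Reals Lra Lia.
Open Scope R_scope.

(* sumR n g = g 0 + ... + g (n-1)  (indices shifted: f_i of the paper is f (i-1)) *)
Fixpoint sumR (n : nat) (g : nat -> R) : R :=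
  match n with
  | O => 0
  | S k => sumR k g + g k
  end.

Definition admissible (q : nat) (F P m : R) (f p : nat -> R) : Prop :=
  (forall i, (i < q)%nat -> 0 < f i /\ 0 < p i) /\
  sumR q f = F /\
  sumR q p = P /\
  (forall i, (S i < q)%nat -> f (S i) * p (S i) <= f i * p i) /\
  f 0%nat * p 0%nat <= m.

Definition objective_values (q : nat) (F P m : R) : R -> Prop :=
  fun s => exists f p : nat -> R,
    admissible q F P m f p /\ s = sumR q (fun i => f i * p i).

From Stdlib Require Import Reals Lra Lia Psatz.
Open Scope R_scope.

(* Upper bounds: every product f_i p_i is at most f_1 p_1 <= m; the products sum to at
   most (sum f)(sum p) = FP; and by Cauchy-Schwarz the numbers x_i = sqrt (f_i p_i),
   which lie in [0, sqrt m], sum to at most sqrt (FP).  Writing sqrt (FP) = u sqrt m + r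
   with 0 <= r <= sqrt m, such a sum of squares is largest when u of the x_i equal
   sqrt m and one equals r.
   Lower bounds: proportional configurations f = L F, p = L P with sum L = 1 have value
   FP sum L_i^2, and weights (c, ..., c, w, d, ..., d) with d -> 0 approach the first two
   values.  When m < FP / q^2 the value mq is attained by making every product equal
   to m: q - 1 equal f_i and one more, found by the intermediate value theorem. *)

Lemma sumR_ext n g h : (forall i, (i < n)%nat -> g i = h i) -> sumR n g = sumR n h.
Proof.
  induction n as [|n IH]; intros Hgh; simpl; [reflexivity|].
  rewrite IH by (intros; apply Hgh; lia). rewrite Hgh by lia. reflexivity.
Qed.

Lemma sumR_le n g h : (forall i, (i < n)%nat -> g i <= h i) -> sumR n g <= sumR n h.
Proof.
  induction n as [|n IH]; intros Hgh; simpl; [lra|].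
  assert (sumR n g <= sumR n h) by (apply IH; intros; apply Hgh; lia).
  assert (g n <= h n) by (apply Hgh; lia).
  lra.
Qed.

Lemma sumR_const n c : sumR n (fun _ => c) = INR n * c.
Proof. induction n as [|n IH]; simpl sumR; [simpl; lra|]. rewrite IH, S_INR. lra. Qed.

Lemma sumR_nonneg n g : (forall i, (i < n)%nat -> 0 <= g i) -> 0 <= sumR n g.
Proof.
  intros Hg. rewrite <- (Rmult_0_r (INR n)), <- sumR_const. apply sumR_le, Hg.
Qed.

Lemma sumR_mult_r n g c : sumR n (fun i => g i * c) = sumR n g * c.
Proof. induction n as [|n IH]; simpl; [lra|]. rewrite IH. lra. Qed.

Lemma sumR_plus n g h : sumR n (fun i => g i + h i) = sumR n g + sumR n h.
Proof. induction n as [|n IH]; simpl; [lra|]. rewrite IH. lra. Qed.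

Lemma sumR_add_len a b g : sumR (a + b) g = sumR a g + sumR b (fun i => g (a + i)%nat).
Proof.
  induction b as [|b IH]; simpl.
  - rewrite Nat.add_0_r. lra.
  - rewrite Nat.add_succ_r. simpl. rewrite IH. lra.
Qed.

Lemma sumR_S_l n g : sumR (S n) g = g 0%nat + sumR n (fun i => g (S i)).
Proof. induction n as [|n IH]; simpl; [lra|]. simpl in IH. rewrite IH. lra. Qed.

Lemma sumR_mult_le n a b : (forall i, (i < n)%nat -> 0 <= a i /\ 0 <= b i) ->
  sumR n (fun i => a i * b i) <= sumR n a * sumR n b.
Proof.
  induction n as [|n IH]; intros Hab; simpl; [lra|].
  assert (sumR n (fun i => a i * b i) <= sumR n a * sumR n b) by (apply IH; intros; apply Hab; lia).
  assert (0 <= sumR n a) by (apply sumR_nonneg; intros; apply Hab; lia).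
  assert (0 <= sumR n b) by (apply sumR_nonneg; intros; apply Hab; lia).
  destruct (Hab n) as [Ha Hb]; [lia|].
  nra.
Qed.

Lemma sqrt_mult_add_le A B a b : 0 <= A -> 0 <= B -> 0 <= a -> 0 <= b ->
  sqrt (A * B) + sqrt (a * b) <= sqrt ((A + a) * (B + b)).
Proof.
  intros HA HB Ha Hb.
  rewrite <- (pow2_sqrt A HA), <- (pow2_sqrt B HB), <- (pow2_sqrt a Ha), <- (pow2_sqrt b Hb).
  pose proof (sqrt_pos A); pose proof (sqrt_pos B); pose proof (sqrt_pos a); pose proof (sqrt_pos b).
  set (s := sqrt A) in *; set (t := sqrt B) in *; set (x := sqrt a) in *; set (y := sqrt b) in *.
  assert (0 <= s * t) by (apply Rmult_le_pos; lra).
  assert (0 <= x * y) by (apply Rmult_le_pos; lra).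
  rewrite <- !Rpow_mult_distr, !sqrt_pow2 by lra.
  rewrite <- (sqrt_pow2 (s * t + x * y)) by lra.
  apply sqrt_le_1_alt.
  assert (Lagrange : (s^2 + x^2) * (t^2 + y^2) - (s*t + x*y)^2 = (s*y - x*t)^2) by ring.
  pose proof (pow2_ge_0 (s*y - x*t)).
  lra.
Qed.

Lemma sumR_sqrt_mult_le n a b : (forall i, (i < n)%nat -> 0 <= a i /\ 0 <= b i) ->
  sumR n (fun i => sqrt (a i * b i)) <= sqrt (sumR n a * sumR n b).
Proof.
  induction n as [|n IH]; intros Hab; simpl.
  - rewrite Rmult_0_l, sqrt_0. lra.
  - assert (sumR n (fun i => sqrt (a i * b i)) <= sqrt (sumR n a * sumR n b))
      by (apply IH; intros; apply Hab; lia).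
    assert (0 <= sumR n a) by (apply sumR_nonneg; intros; apply Hab; lia).
    assert (0 <= sumR n b) by (apply sumR_nonneg; intros; apply Hab; lia).
    destruct (Hab n) as [Ha Hb]; [lia|].
    pose proof (sqrt_mult_add_le (sumR n a) (sumR n b) (a n) (b n)).
    lra.
Qed.

Fixpoint count_gt (r : R) (x : nat -> R) (n : nat) : nat :=
  match n with
  | O => O
  | S k => if Rlt_dec r (x k) then S (count_gt r x k) else count_gt r x k
  end.

Definition excess (r t : R) : R := Rmax 0 (t - r).

Lemma excess_gt r t : r < t -> excess r t = t - r.
Proof. intros H. apply Rmax_right. lra. Qed.

Lemma excess_le r t : t <= r -> excess r t = 0.
Proof. intros H. apply Rmax_left. lra. Qed.

Lemma sq_le_excess r M t : 0 <= r -> 0 <= t <= M -> t ^ 2 <= t * r + excess r t * M.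
Proof.
  intros Hr Ht. destruct (Rlt_le_dec r t) as [H|H].
  - rewrite excess_gt by exact H.
    assert (0 <= (t - r) * (M - t)) by (apply Rmult_le_pos; lra). nra.
  - rewrite excess_le by exact H.
    assert (0 <= t * (r - t)) by (apply Rmult_le_pos; lra). nra.
Qed.

Section Excess.

Variables (x : nat -> R) (r M : R).
Hypothesis r_range : 0 <= r <= M.

Lemma sumR_excess_le n : (forall i, (i < n)%nat -> 0 <= x i <= M) ->
  sumR n (fun i => excess r (x i)) <= INR (count_gt r x n) * (M - r) /\
  sumR n (fun i => excess r (x i)) <= sumR n x - INR (count_gt r x n) * r.
Proof.
  induction n as [|n IH]; intros Hx; cbn [sumR count_gt]; [simpl; lra|].
  destruct IH as [IH1 IH2]; [intros; apply Hx; lia|].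
  destruct (Hx n) as [H1 H2]; [lia|].
  destruct (Rlt_dec r (x n)) as [H|H].
  - rewrite excess_gt, S_INR by exact H. lra.
  - rewrite excess_le by lra. lra.
Qed.

(* On [0, M], t^2 <= r t + M (t - r)^+, and the total excess over r is at most
   u (M - r): either at most u terms exceed r, or at least u + 1 do and they then
   already use up (u + 1) r of the sum. *)
Lemma sumR_sq_le_packed n (u : nat) : (forall i, (i < n)%nat -> 0 <= x i <= M) ->
  sumR n x <= INR u * M + r -> sumR n (fun i => x i ^ 2) <= INR u * M ^ 2 + r ^ 2.
Proof.
  intros Hx Hsum.
  assert (Hsq : sumR n (fun i => x i ^ 2) <= sumR n x * r + sumR n (fun i => excess r (x i)) * M).
  { rewrite <- !sumR_mult_r, <- sumR_plus.
    apply sumR_le. intros i Hi. apply sq_le_excess; [lra | apply Hx, Hi]. }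
  assert (Hexc : sumR n (fun i => excess r (x i)) <= INR u * (M - r)).
  { destruct (sumR_excess_le n Hx) as [E1 E2].
    destruct (Compare_dec.le_lt_dec (count_gt r x n) u) as [Hc|Hc]; apply le_INR in Hc.
    - nra.
    - rewrite S_INR in Hc. nra. }
  nra.
Qed.

End Excess.

Lemma admissible_nonneg q F P m f p : admissible q F P m f p ->
  forall i, (i < q)%nat -> 0 <= f i /\ 0 <= p i.
Proof. intros [Hpos _] i Hi. destruct (Hpos i Hi). split; lra. Qed.

Lemma admissible_prod_le q F P m f p : admissible q F P m f p ->
  forall i, (i < q)%nat -> f i * p i <= m.
Proof.
  intros (_ & _ & _ & Hdec & H0) i. induction i as [|i IH]; intros Hi; [exact H0|].
  pose proof (Hdec i Hi). pose proof (IH ltac:(lia)). lra.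
Qed.

Lemma objective_le_FP q F P m s : objective_values q F P m s -> s <= F * P.
Proof.
  intros (f & p & Hadm & ->).
  pose proof (sumR_mult_le q f p (admissible_nonneg _ _ _ _ _ _ Hadm)) as H.
  destruct Hadm as (_ & HF & HP & _). rewrite HF, HP in H. exact H.
Qed.

Lemma objective_le_mq q F P m s : objective_values q F P m s -> s <= m * INR q.
Proof.
  intros (f & p & Hadm & ->). rewrite Rmult_comm, <- sumR_const.
  apply sumR_le, (admissible_prod_le _ _ _ _ _ _ Hadm).
Qed.

Lemma objective_le_packed q F P m (u : nat) s :
  0 <= sqrt (F * P) - INR u * sqrt m <= sqrt m -> 0 < m -> objective_values q F P m s ->
  s <= INR u * m + (sqrt (F * P) - INR u * sqrt m) ^ 2.
Proof.
  intros Hr Hm (f & p & Hadm & ->).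
  pose proof (admissible_nonneg _ _ _ _ _ _ Hadm) as Hnn.
  pose proof (admissible_prod_le _ _ _ _ _ _ Hadm) as Hle.
  pose proof (sumR_sqrt_mult_le q f p Hnn) as CS.
  destruct Hadm as (_ & HF & HP & _). rewrite HF, HP in CS.
  rewrite <- (pow2_sqrt m) at 1 by lra.
  rewrite (sumR_ext q _ (fun i => sqrt (f i * p i) ^ 2)).
  - apply sumR_sq_le_packed; [exact Hr | | lra].
    intros i Hi. split; [apply sqrt_pos | apply sqrt_le_1_alt, Hle, Hi].
  - intros i Hi. destruct (Hnn i Hi). rewrite pow2_sqrt; [reflexivity | nra].
Qed.

Definition steps (u : nat) (a b c : R) (i : nat) : R :=
  if (i <? u)%nat then a else if (i =? u)%nat then b else c.

Lemma steps_lt u a b c i : (i < u)%nat -> steps u a b c i = a.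
Proof. intros H. unfold steps. apply Nat.ltb_lt in H. now rewrite H. Qed.

Lemma steps_eq u a b c : steps u a b c u = b.
Proof. unfold steps. now rewrite Nat.ltb_irrefl, Nat.eqb_refl. Qed.

Lemma steps_gt u a b c i : (u < i)%nat -> steps u a b c i = c.
Proof.
  intros H. unfold steps.
  replace (i <? u)%nat with false by (symmetry; apply Nat.ltb_ge; lia).
  replace (i =? u)%nat with false by (symmetry; apply Nat.eqb_neq; lia).
  reflexivity.
Qed.

Lemma steps_cases u a b c i : steps u a b c i = a \/ steps u a b c i = b \/ steps u a b c i = c.
Proof. unfold steps. destruct (i <? u)%nat, (i =? u)%nat; auto. Qed.

Lemma steps_sum u k a b c (g : R -> R) :
  sumR (u + S k) (fun i => g (steps u a b c i)) = INR u * g a + g b + INR k * g c.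
Proof.
  rewrite sumR_add_len, sumR_S_l, Nat.add_0_r, steps_eq.
  rewrite (sumR_ext u _ (fun _ => g a)) by (intros; now rewrite steps_lt).
  rewrite (sumR_ext k _ (fun _ => g c)) by (intros; now rewrite steps_gt by lia).
  rewrite !sumR_const. lra.
Qed.

Lemma steps_nonincr u a b c i : c <= b <= a -> steps u a b c (S i) <= steps u a b c i.
Proof.
  intros H. destruct (Nat.lt_trichotomy (S i) u) as [Hi|[Hi|Hi]].
  - rewrite !steps_lt by lia. lra.
  - rewrite Hi, steps_eq, steps_lt by lia. lra.
  - destruct (Nat.eq_dec i u) as [->|Hiu].
    + rewrite steps_eq, steps_gt by lia. lra.
    + rewrite !steps_gt by lia. lra.
Qed.

Lemma step_weights_approx (q u : nat) (c eps : R) :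
  (u < q)%nat -> 0 < c -> 0 < 1 - INR u * c <= c -> 0 < eps ->
  exists L : nat -> R, (forall i, 0 < L i <= c) /\ (forall i, L (S i) <= L i) /\
    sumR q L = 1 /\ INR u * c ^ 2 + (1 - INR u * c) ^ 2 - eps < sumR q (fun i => L i ^ 2).
Proof.
  intros Huq Hc Hw Heps.
  set (k := (q - u - 1)%nat). assert (Hq : q = (u + S k)%nat) by (unfold k; lia).
  set (w := 1 - INR u * c) in *.
  pose proof (pos_INR k) as Hk.
  set (d := Rmin (w / (INR k + 1)) (eps / (2 * (INR k + 1)))).
  assert (Hd : 0 < d) by (apply Rmin_glb_lt; apply Rdiv_lt_0_compat; lra).
  assert (Hdw : (INR k + 1) * d <= w).
  { assert (H : d <= w / (INR k + 1)) by apply Rmin_l.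
    apply (Rmult_le_compat_l (INR k + 1)) in H; [|lra].
    replace ((INR k + 1) * (w / (INR k + 1))) with w in H by (field; lra). exact H. }
  assert (Hdeps : 2 * (INR k + 1) * d <= eps).
  { assert (H : d <= eps / (2 * (INR k + 1))) by apply Rmin_r.
    apply (Rmult_le_compat_l (2 * (INR k + 1))) in H; [|lra].
    replace (2 * (INR k + 1) * (eps / (2 * (INR k + 1)))) with eps in H by (field; lra). exact H. }
  exists (steps u c (w - INR k * d) d). split; [|split; [|split]].
  - intros i. destruct (steps_cases u c (w - INR k * d) d i) as [ -> | [ -> | -> ] ]; nra.
  - intros i. apply steps_nonincr. nra.
  - rewrite Hq. etransitivity; [exact (steps_sum u k c (w - INR k * d) d (fun t => t))|].
    unfold w. ring.
  - rewrite Hq, (steps_sum u k c (w - INR k * d) d (fun t => t ^ 2)).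
    assert (0 <= INR k * d ^ 2) by (apply Rmult_le_pos; nra).
    assert (0 <= INR u * c) by (apply Rmult_le_pos; [apply pos_INR | lra]).
    assert (w * (INR k * d) <= INR k * d) by (unfold w; nra).
    nra.
Qed.

Lemma proportional_objective q F P m (L : nat -> R) :
  0 < F -> 0 < P -> (forall i, 0 < L i) -> (forall i, L (S i) <= L i) ->
  sumR q L = 1 -> L 0%nat ^ 2 * (F * P) <= m ->
  objective_values q F P m (F * P * sumR q (fun i => L i ^ 2)).
Proof.
  intros HF HP Hpos Hdec Hsum Hm.
  exists (fun i => L i * F), (fun i => L i * P). split.
  - repeat split.
    + specialize (Hpos i). nra.
    + specialize (Hpos i). nra.
    + rewrite sumR_mult_r, Hsum. ring.
    + rewrite sumR_mult_r, Hsum. ring.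
    + intros i _. specialize (Hdec i). pose proof (Hpos i). pose proof (Hpos (S i)).
      assert (L (S i) ^ 2 <= L i ^ 2) by nra.
      assert (0 < F * P) by nra. nra.
    + nra.
  - rewrite Rmult_comm, <- sumR_mult_r. apply sumR_ext. intros. ring.
Qed.

Lemma objective_approx q F P m (u : nat) c eps :
  (u < q)%nat -> 0 < F -> 0 < P -> 0 < c -> 0 < 1 - INR u * c <= c ->
  c ^ 2 * (F * P) <= m -> 0 < eps ->
  exists s, objective_values q F P m s /\ F * P * (INR u * c ^ 2 + (1 - INR u * c) ^ 2) - eps < s.
Proof.
  intros Huq HF HP Hc Hw Hm Heps.
  assert (HFP : 0 < F * P) by nra.
  destruct (step_weights_approx q u c (eps / (F * P)) Huq Hc Hw)
    as (L & HL & Hdec & Hsum & Happrox); [apply Rdiv_lt_0_compat; lra|].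
  exists (F * P * sumR q (fun i => L i ^ 2)). split.
  - apply proportional_objective; try assumption.
    + intros i. apply HL.
    + destruct (HL 0%nat). assert (L 0%nat ^ 2 <= c ^ 2) by nra. nra.
  - apply (Rmult_lt_compat_l (F * P)) in Happrox; [|exact HFP].
    rewrite Rmult_minus_distr_l in Happrox.
    replace (F * P * (eps / (F * P))) with eps in Happrox by (field; lra).
    lra.
Qed.

(* [Q z = z b ((n - 1) m / z + m / b - P)] with [b = F - (n - 1) z]; it is positive
   at [0] and negative at [F / n]. *)
Lemma exists_equal_products_split (n F P m : R) :
  1 < n -> 0 < F -> 0 < m -> m * n ^ 2 < F * P ->
  exists z, 0 < z /\ n * z < F /\ (n - 1) * (m / z) + m / (F - (n - 1) * z) = P.
Proof.
  intros Hn HF Hm HFP.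
  set (Q := fun a => (n - 1) * m * (F - (n - 1) * a) + a * (m - P * (F - (n - 1) * a))).
  assert (HQ0 : 0 < Q 0) by (unfold Q; rewrite Rmult_0_r, Rminus_0_r, Rmult_0_l, Rplus_0_r;
                              repeat apply Rmult_lt_0_compat; lra).
  assert (HQ1 : Q (F / n) < 0).
  { replace (Q (F / n)) with (F / n ^ 2 * (m * n ^ 2 - F * P)) by (unfold Q; field; lra).
    assert (0 < F / n ^ 2) by (apply Rdiv_lt_0_compat; nra). nra. }
  assert (Hcont : continuity (fun a => - Q a)) by (unfold Q; reg).
  destruct (IVT (fun a => - Q a) 0 (F / n) Hcont) as (z & [Hz0 Hz1] & Hz);
    [apply Rdiv_lt_0_compat; lra | lra | lra |].
  assert (Qz : Q z = 0) by lra.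
  assert (Hz0' : 0 < z) by (destruct Hz0 as [ | <- ]; [assumption | lra]).
  assert (Hz1' : z < F / n) by (destruct Hz1 as [ | -> ]; [assumption | lra]).
  assert (HnzF : n * z < F).
  { apply (Rmult_lt_compat_l n) in Hz1'; [|lra].
    replace (n * (F / n)) with F in Hz1' by (field; lra). exact Hz1'. }
  exists z. repeat split; try assumption.
  assert (E : (n - 1) * (m / z) + m / (F - (n - 1) * z) - P = Q z / (z * (F - (n - 1) * z)))
    by (unfold Q; field; lra).
  rewrite Qz, Rdiv_0_l in E. lra.
Qed.

Lemma objective_attains_mq q F P m : (2 <= q)%nat -> 0 < F -> 0 < m ->
  m * INR q ^ 2 < F * P -> objective_values q F P m (m * INR q).
Proof.
  intros Hq HF Hm HFP.
  assert (Hn : 1 < INR q) by (apply (lt_INR 1); lia).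
  destruct (exists_equal_products_split (INR q) F P m Hn HF Hm HFP) as (z & Hz & HzF & HzP).
  set (b := F - (INR q - 1) * z) in *.
  assert (Hb : 0 < b) by (unfold b; lra).
  assert (Hqs : q = ((q - 1) + S 0)%nat) by lia.
  assert (Hq1 : INR (q - 1) = INR q - 1) by (rewrite minus_INR by lia; reflexivity).
  set (f := steps (q - 1) z b b).
  assert (Hf : forall i, 0 < f i) by (intros i; unfold f; destruct (steps_cases (q - 1) z b b i) as [ -> | [ -> | -> ] ]; lra).
  assert (Hprod : forall i, f i * (m / f i) = m) by (intros i; field; specialize (Hf i); lra).
  exists f, (fun i => m / f i). split.
  - repeat split.
    + apply Hf.
    + apply Rdiv_lt_0_compat; [lra | apply Hf].
    + rewrite Hqs. etransitivity; [exact (steps_sum (q - 1) 0 z b b (fun t => t))|].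
      rewrite Hq1. unfold b. simpl. ring.
    + rewrite Hqs. etransitivity; [exact (steps_sum (q - 1) 0 z b b (fun t => m / t))|].
      rewrite Hq1, <- HzP. simpl. ring.
    + intros i _. rewrite !Hprod. lra.
    + rewrite Hprod. lra.
  - rewrite (sumR_ext q _ (fun _ => m)) by (intros; apply Hprod).
    rewrite sumR_const. ring.
Qed.

Lemma is_lub_approx (E : R -> Prop) (V : R) : (forall s, E s -> s <= V) ->
  (forall eps, 0 < eps -> exists s, E s /\ V - eps < s) -> is_lub E V.
Proof.
  intros Hub Happrox. split; [exact Hub|]. intros b Hb.
  destruct (Rle_lt_dec V b) as [H|H]; [exact H|].
  destruct (Happrox (V - b)) as (s & Hs & Hlt); [lra|].
  specialize (Hb s Hs). lra.
Qed.

Lemma objective_lub_FP q F P m : (1 <= q)%nat -> 0 < F -> 0 < P -> F * P <= m ->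
  is_lub (objective_values q F P m) (F * P).
Proof.
  intros Hq HF HP Hm. apply is_lub_approx; [apply objective_le_FP|].
  intros eps Heps.
  destruct (objective_approx q F P m 0 1 eps) as (s & Hs & Hlt); simpl; try lra; try lia.
  exists s. split; [exact Hs|]. simpl in Hlt. lra.
Qed.

Lemma objective_lub_packed q F P m (u : nat) : (u < q)%nat -> 0 < F -> 0 < P -> 0 < m ->
  INR u * sqrt m < sqrt (F * P) <= (INR u + 1) * sqrt m ->
  is_lub (objective_values q F P m) (INR u * m + (sqrt (F * P) - INR u * sqrt m) ^ 2).
Proof.
  intros Huq HF HP Hm Hrange.
  apply is_lub_approx; [intros s; apply objective_le_packed; lra|].
  intros eps Heps.
  assert (HFP : 0 < F * P) by nra.
  pose proof (sqrt_lt_R0 _ HFP) as HS. pose proof (sqrt_lt_R0 _ Hm) as HM.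
  set (c := sqrt m / sqrt (F * P)).
  assert (Hc2 : c ^ 2 * (F * P) = m).
  { unfold c, Rdiv. rewrite Rpow_mult_distr, pow_inv, !pow2_sqrt by lra. field. lra. }
  assert (Hw : 1 - INR u * c = (sqrt (F * P) - INR u * sqrt m) / sqrt (F * P))
    by (unfold c; field; lra).
  destruct (objective_approx q F P m u c eps) as (s & Hs & Hlt); try assumption.
  - apply Rdiv_lt_0_compat; assumption.
  - rewrite Hw. split; [apply Rdiv_lt_0_compat; lra|].
    unfold c, Rdiv. apply Rmult_le_compat_r; [apply Rlt_le, Rinv_0_lt_compat|]; lra.
  - lra.
  - exists s. split; [exact Hs|].
    replace (INR u * m + (sqrt (F * P) - INR u * sqrt m) ^ 2)
      with (F * P * (INR u * c ^ 2 + (1 - INR u * c) ^ 2)); [exact Hlt|].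
    rewrite Rmult_plus_distr_l, Hw. f_equal.
    + rewrite <- Hc2. ring.
    + unfold Rdiv. rewrite Rpow_mult_distr, pow_inv, pow2_sqrt by lra. field. lra.
Qed.

Lemma objective_lub_mq q F P m : (2 <= q)%nat -> 0 < F -> 0 < m ->
  m * INR q ^ 2 < F * P -> is_lub (objective_values q F P m) (m * INR q).
Proof.
  intros Hq HF Hm HFP. split; [intros s; apply objective_le_mq|].
  intros b Hb. apply Hb, objective_attains_mq; assumption.
Qed.

Lemma Rmult_le_of_div_le a b c : 0 < c -> a / c <= b -> a <= b * c.
Proof.
  intros Hc H. apply (Rmult_le_compat_r c) in H; [|lra].
  replace (a / c * c) with a in H by (field; lra). exact H.
Qed.

Lemma Rmult_lt_of_lt_div a b c : 0 < c -> a < b / c -> a * c < b.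
Proof.
  intros Hc H. apply (Rmult_lt_compat_r c) in H; [|lra].
  replace (b / c * c) with b in H by (field; lra). exact H.
Qed.

Lemma sqrt_mult_pow2 x y : 0 <= x -> 0 <= y -> sqrt (x * y ^ 2) = sqrt x * y.
Proof. intros Hx Hy. rewrite sqrt_mult_alt, sqrt_pow2 by (try apply pow2_ge_0; lra). reflexivity. Qed.

Lemma sqrt_range_of_div_range (u : nat) X m : (1 <= u)%nat -> 0 < m ->
  X / (INR u + 1) ^ 2 <= m -> m < X / INR u ^ 2 ->
  INR u * sqrt m < sqrt X <= (INR u + 1) * sqrt m.
Proof.
  intros Hu Hm Hlo Hhi.
  assert (HU : 1 <= INR u) by (apply (le_INR 1); exact Hu).
  apply Rmult_le_of_div_le in Hlo; [|nra].
  apply Rmult_lt_of_lt_div in Hhi; [|nra].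
  rewrite !(Rmult_comm _ (sqrt m)), <- !sqrt_mult_pow2 by lra.
  split; [apply sqrt_lt_1_alt | apply sqrt_le_1_alt]; nra.
Qed.

Theorem lemmaA2 (q : nat) (F P m : R)
  (hq : (2 <= q)%nat) (hF : 0 < F) (hP : 0 < P) (hm : 0 < m) :
  (F * P <= m -> is_lub (objective_values q F P m) (F * P)) /\
  (forall u : nat, (1 <= u)%nat -> (u <= q - 1)%nat ->
     F * P / (INR u + 1) ^ 2 <= m -> m < F * P / INR u ^ 2 ->
     is_lub (objective_values q F P m)
       (INR u * m + (sqrt (F * P) - INR u * sqrt m) ^ 2)) /\
  (m < F * P / INR q ^ 2 -> is_lub (objective_values q F P m) (m * INR q)).
Proof.
  split; [|split].
  - apply objective_lub_FP; [lia | assumption ..].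
  - intros u Hu Huq Hlo Hhi. apply objective_lub_packed; [lia | assumption .. |].
    exact (sqrt_range_of_div_range u (F * P) m Hu hm Hlo Hhi).
  - intros Hhi. apply objective_lub_mq; try assumption.
    apply Rmult_lt_of_lt_div; [|exact Hhi].
    assert (1 < INR q) by (apply (lt_INR 1); lia). nra.
Qed.
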